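(* Let $F$ be $L$-periodic and infinitely differentiable. Then for every fixed $i\ge1$ and $j\ge1$, $$I\big(c^{(N)}_{ij}\big)=\limsup_{N\to\infty}\frac{\ln|c^{(N)}_{ij}|}{\ln N}\le\frac{j-1}{2}.$$
   Context: Let $N\ge2$, $L>0$, $\Delta=L/N$, $x_i=(i-1)L/N$, indices modulo $N$. Discrete derivatives act on the index $i$: $(\nabla^+g)(i)=g(i+1)-g(i)$, $(\nabla^-g)(i)=g(i)-g(i-1)$. Let $d_m=(-1)^m(m+1)$. Define $c^{(N)}_{i1}=F(x_i)$, $c^{(N)}_{i2}=0$, and for $j\ge3$ $$c_{ij}=-\sum_{m=1}^{\lfloor (j-1)/2\rfloor}\ \sum_{j_1+\dots+j_m=j-m-1}\frac{d_m}{j}\Delta^{-2-m}\,\nabla^-\!\Big(\prod_{p=1}^m\frac{\nabla^+c_{i,j_p}}{j_p+1}\Big)+\sum_{k=1}^{\lfloor (j-1)/2\rfloor}\ \sum_{j_1+\dots+j_k=j-k-1}\frac{1}{j\,k!}F^{(k)}(x_i)\prod_{p=1}^k\frac{c_{i,j_p}}{j_p+1},$$ inner sums over ordered tuples of positive integers. (These are the Taylor coefficients at $t=0$ of the velocities $v_i$ for the system $\ddot x_i=(x_i-x_{i-1})^{-2}-(x_{i+1}-x_i)^{-2}+F(x_i)$ on the circle of length $L$ with $x_i(0)=(i-1)L/N$, $\dot x_i(0)=0$.) *)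

From Stdlib Require Import Reals List ZArith Arith.
Import ListNotations.
Open Scope R_scope.

Definition xpos (L : R) (N : nat) (i : Z) : R :=
  IZR (((i - 1) mod Z.of_nat N)%Z) * L / INR N.

(* All ordered tuples (j_1,...,j_m) of positive integers with sum s. *)
Fixpoint comps (m s : nat) : list (list nat) :=
  match m with
  | O => match s with O => [nil] | _ => nil end
  | S m' => flat_map (fun a => map (cons a) (comps m' (s - a))) (seq 1 s)
  end.

Definition sumR (l : list R) : R := fold_right Rplus 0 l.
Definition prodR (l : list R) : R := fold_right Rmult 1 l.

Definition dcoef (m : nat) : R := (-1) ^ m * INR (m + 1).

(* Fuel-based definition of the recursion; Fd k is the k-th derivative F^(k).
   Indices i are integers; discrete derivatives shift i by +-1. *)
Fixpoint cfuel (L : R) (Fd : nat -> R -> R) (N : nat) (fuel : nat)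
    (i : Z) (j : nat) {struct fuel} : R :=
  match fuel with
  | O => 0
  | S fuel' =>
    match j with
    | O => 0
    | S O => Fd O (xpos L N i)
    | S (S O) => 0
    | S (S (S _)) =>
      let c := cfuel L Fd N fuel' in
      let Delta := L / INR N in
      let P := fun (t : list nat) (i0 : Z) =>
        prodR (map (fun jp => (c (i0 + 1)%Z jp - c i0 jp) / INR (jp + 1)) t) in
      - sumR (map (fun m =>
            sumR (map (fun t =>
              dcoef m / INR j * / (Delta ^ (2 + m)) * (P t i - P t (i - 1)%Z))
              (comps m (j - m - 1))))
           (seq 1 ((j - 1) / 2)))
      + sumR (map (fun k =>
            sumR (map (fun t =>
              / (INR j * INR (fact k)) * Fd k (xpos L N i) *
              prodR (map (fun jp => c i jp / INR (jp + 1)) t))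
              (comps k (j - k - 1))))
           (seq 1 ((j - 1) / 2)))
    end
  end.

Definition ccoef (L : R) (Fd : nat -> R -> R) (N : nat) (i : Z) (j : nat) : R :=
  cfuel L Fd N j i j.

From Stdlib Require Import Reals List ZArith Arith Lra Lia Psatz.
From Stdlib Require Import FunctionalExtensionality IndefiniteDescription.
Open Scope R_scope.

(* Let h = L/N be the lattice spacing and Δ the forward difference in the index i.
   A family of sequences A_N : Z -> R has "lattice size N^p" ([lattice_size]) when
   |Δ^k A_N(i)| <= M_k h^k N^p uniformly in N and i: each difference costs a factor
   h, as for samples of a smooth function.  This class is closed under sums and
   scalar multiples, under products (exponents add, by a discrete Leibniz rule),
   under the rescaled differences N Δ^± (exponent unchanged) and under
   multiplication by N (exponent + 1).  Samples F^(k)(x_i) of the derivatives of a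
   smooth L-periodic F have size N^0, by the mean value theorem and boundedness of
   continuous periodic functions.  In the recursion for c_{ij}, a term of the first
   sum is h^{-2-m} ∇^-(∏ ∇^+ c_{j_p}) ~ N (N ∇^-)(∏ N ∇^+ c_{j_p}), and a term of the
   second is F^(k)(x_i) ∏ c_{j_p}; since 2 Σ⌊(j_p-1)/2⌋ + m <= Σ j_p = j - m - 1, strong
   induction on j shows that c_{·j} has size N^{⌊(j-1)/2⌋}.  The case k = 0 gives
   |c_{ij}| <= C N^{(j-1)/2}, from which the logarithmic bound follows. *)

Definition fdiff (a : Z -> R) : Z -> R := fun i => a (i + 1)%Z - a i.

Fixpoint fdiffn (k : nat) (a : Z -> R) : Z -> R :=
  match k with O => a | S k' => fdiffn k' (fdiff a) end.

Lemma fdiffn_plus k : forall (a b : Z -> R) i,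
  fdiffn k (fun i => a i + b i) i = fdiffn k a i + fdiffn k b i.
Proof.
  induction k as [|k IH]; intros a b i; simpl; [reflexivity|].
  rewrite <- IH. f_equal. unfold fdiff. apply functional_extensionality; intro; ring.
Qed.

Lemma fdiffn_scal k : forall (c : R) (a : Z -> R) i,
  fdiffn k (fun i => c * a i) i = c * fdiffn k a i.
Proof.
  induction k as [|k IH]; intros c a i; simpl; [reflexivity|].
  rewrite <- IH. f_equal. unfold fdiff. apply functional_extensionality; intro; ring.
Qed.

Lemma fdiffn_minus k (a b : Z -> R) i :
  fdiffn k (fun i => a i - b i) i = fdiffn k a i - fdiffn k b i.
Proof.
  replace (fun i => a i - b i) with (fun i => a i + (-1) * b i)
    by (apply functional_extensionality; intro; ring).
  rewrite fdiffn_plus, fdiffn_scal. ring.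
Qed.

Lemma fdiffn_shift k : forall (s : Z) (a : Z -> R) i,
  fdiffn k (fun i => a (i + s)%Z) i = fdiffn k a (i + s)%Z.
Proof.
  induction k as [|k IH]; intros s a i; simpl; [reflexivity|].
  rewrite <- IH. f_equal. unfold fdiff. apply functional_extensionality; intro x.
  replace (x + 1 + s)%Z with (x + s + 1)%Z by ring. reflexivity.
Qed.

Lemma fdiffn_const k (c : R) i :
  fdiffn k (fun _ => c) i = match k with O => c | S _ => 0 end.
Proof.
  destruct k as [|k]; simpl; [reflexivity|].
  replace (fdiff (fun _ => c)) with (fun _ : Z => 0 * c)
    by (unfold fdiff; apply functional_extensionality; intro; ring).
  rewrite fdiffn_scal. ring.
Qed.

Lemma fdiffn_back k (a : Z -> R) i :
  fdiffn k (fun i => a i - a (i - 1)%Z) i = fdiffn (S k) a (i - 1)%Z.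
Proof.
  replace (fun i => a i - a (i - 1)%Z) with (fun i => a i - a (i + -1)%Z)
    by (apply functional_extensionality; intro x; do 2 f_equal; ring).
  simpl. unfold fdiff. rewrite !fdiffn_minus, (fdiffn_shift k 1), (fdiffn_shift k (-1)).
  replace (i - 1 + 1)%Z with i by ring. replace (i + -1)%Z with (i - 1)%Z by ring.
  reflexivity.
Qed.

(* Coefficients of the discrete Leibniz rule: the bound on Δ^k(ab) obtained from
   bounds Ma, Mb on the differences of a and b. *)
Fixpoint leibniz_coef (k : nat) (Ma Mb : nat -> R) : R :=
  match k with
  | O => Ma O * Mb O
  | S k' => leibniz_coef k' (fun r => Ma (S r)) Mb + leibniz_coef k' Ma (fun r => Mb (S r))
  end.

Lemma leibniz_coef_nonneg k : forall Ma Mb : nat -> R,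
  (forall r, 0 <= Ma r) -> (forall r, 0 <= Mb r) -> 0 <= leibniz_coef k Ma Mb.
Proof.
  induction k as [|k IH]; intros Ma Mb Ha Hb; simpl.
  - apply Rmult_le_pos; auto.
  - apply Rplus_le_le_0_compat; apply IH; auto.
Qed.

Lemma fdiffn_rescaled_bound (a : Z -> R) (Ma : nat -> R) (X D : R) : 0 < D ->
  (forall r i, Rabs (fdiffn r a i) <= Ma r * D ^ r * X) ->
  forall r i, Rabs (fdiffn r (fun i => fdiff a i / D) i) <= Ma (S r) * D ^ r * X.
Proof.
  intros HD Ha r i. unfold Rdiv.
  replace (fun i => fdiff a i * / D) with (fun i => / D * fdiff a i)
    by (apply functional_extensionality; intro; ring).
  rewrite fdiffn_scal, Rabs_mult, Rabs_right by (apply Rle_ge, Rlt_le, Rinv_0_lt_compat; lra).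
  apply Rle_trans with (/ D * (Ma (S r) * D ^ S r * X)).
  - apply Rmult_le_compat_l; [apply Rlt_le, Rinv_0_lt_compat; lra|exact (Ha (S r) i)].
  - right. simpl. field. lra.
Qed.

(* Discrete Leibniz estimate, from Δ(ab)(i) = Δa(i) b(i+1) + a(i) Δb(i). *)
Lemma fdiffn_mult_bound k : forall (a b : Z -> R) (Ma Mb : nat -> R) (X Y D : R), 0 < D ->
  (forall r i, Rabs (fdiffn r a i) <= Ma r * D ^ r * X) ->
  (forall r i, Rabs (fdiffn r b i) <= Mb r * D ^ r * Y) ->
  forall i, Rabs (fdiffn k (fun i => a i * b i) i) <= leibniz_coef k Ma Mb * D ^ k * (X * Y).
Proof.
  induction k as [|k IH]; intros a b Ma Mb X Y D HD Ha Hb i.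
  - simpl. rewrite Rabs_mult.
    specialize (Ha 0%nat i). specialize (Hb 0%nat i). simpl in Ha, Hb.
    replace (Ma 0%nat * Mb 0%nat * 1 * (X * Y)) with ((Ma 0%nat * 1 * X) * (Mb 0%nat * 1 * Y))
      by ring.
    apply Rmult_le_compat; auto using Rabs_pos.
  - set (a' := fun i => fdiff a i / D).
    set (b' := fun i => fdiff b i / D).
    set (b1 := fun i => b (i + 1)%Z).
    assert (Hleib : fdiff (fun i => a i * b i) = fun i => D * (a' i * b1 i) + D * (a i * b' i)).
    { apply functional_extensionality; intro x. unfold a', b1, b', fdiff. field. lra. }
    assert (Hb1 : forall r i, Rabs (fdiffn r b1 i) <= Mb r * D ^ r * Y).
    { intros r x. unfold b1. rewrite fdiffn_shift. apply Hb. }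
    pose proof (IH a' b1 _ _ X Y D HD (fdiffn_rescaled_bound a Ma X D HD Ha) Hb1 i) as H1.
    pose proof (IH a b' _ _ X Y D HD Ha (fdiffn_rescaled_bound b Mb Y D HD Hb) i) as H2.
    simpl fdiffn. rewrite Hleib, fdiffn_plus, !fdiffn_scal.
    eapply Rle_trans; [apply Rabs_triang|]. rewrite !Rabs_mult, (Rabs_right D) by lra.
    apply (Rmult_le_compat_l D) in H1; [|lra]. apply (Rmult_le_compat_l D) in H2; [|lra].
    eapply Rle_trans; [apply Rplus_le_compat; [exact H1|exact H2]|].
    right; simpl; ring.
Qed.

(* A family of sequences A_N : Z -> R has "lattice size N^p" when each of its
   k-th differences is O(h^k N^p) uniformly in N and i, where h = L/N is the
   lattice spacing: differencing costs a factor h, as for samples of a smooth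
   function. *)
Definition lattice_size (L : R) (A : nat -> Z -> R) (p : nat) : Prop :=
  exists M : nat -> R, (forall k, 0 <= M k) /\
    forall N k i, (1 <= N)%nat -> Rabs (fdiffn k (A N) i) <= M k * (L / INR N) ^ k * INR N ^ p.

Lemma INR_pos N : (1 <= N)%nat -> 0 < INR N.
Proof. intro; apply lt_0_INR; lia. Qed.

Section LatticeSize.

Variable L : R.
Hypothesis hL : 0 < L.

Lemma spacing_pos N : (1 <= N)%nat -> 0 < L / INR N.
Proof.
  intro HN. pose proof (INR_pos N HN). unfold Rdiv.
  apply Rmult_lt_0_compat; [lra|]. now apply Rinv_0_lt_compat.
Qed.

Lemma lattice_size_ext (A B : nat -> Z -> R) p :
  lattice_size L A p -> (forall N i, (1 <= N)%nat -> A N i = B N i) -> lattice_size L B p.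
Proof.
  intros [M [HM H]] E. exists M; split; auto. intros N k i HN.
  replace (B N) with (A N) by (apply functional_extensionality; auto). auto.
Qed.

Lemma lattice_size_const (c : R) : lattice_size L (fun _ _ => c) 0.
Proof.
  exists (fun k => match k with O => Rabs c | _ => 0 end). split.
  - intro k; destruct k; [apply Rabs_pos|lra].
  - intros N k i HN. rewrite fdiffn_const. destruct k; simpl.
    + lra.
    + rewrite Rabs_R0. lra.
Qed.

Lemma lattice_size_weaken (A : nat -> Z -> R) p p' :
  (p <= p')%nat -> lattice_size L A p -> lattice_size L A p'.
Proof.
  intros Hle [M [HM H]]. exists M. split; auto. intros N k i HN.
  eapply Rle_trans; [apply H; auto|].
  apply Rmult_le_compat_l.
  - apply Rmult_le_pos; auto. apply pow_le, Rlt_le, spacing_pos; auto.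
  - apply Rle_pow; auto. apply (le_INR 1); auto.
Qed.

Lemma lattice_size_plus (A B : nat -> Z -> R) p :
  lattice_size L A p -> lattice_size L B p -> lattice_size L (fun N i => A N i + B N i) p.
Proof.
  intros [M1 [H1 A1]] [M2 [H2 A2]]. exists (fun k => M1 k + M2 k). split.
  - intro k; specialize (H1 k); specialize (H2 k); lra.
  - intros N k i HN. rewrite fdiffn_plus.
    eapply Rle_trans; [apply Rabs_triang|].
    eapply Rle_trans; [apply Rplus_le_compat; [apply A1|apply A2]; auto|]. right; ring.
Qed.

Lemma lattice_size_scal (c : R) (A : nat -> Z -> R) p :
  lattice_size L A p -> lattice_size L (fun N i => c * A N i) p.
Proof.
  intros [M [H1 A1]]. exists (fun k => Rabs c * M k). split.
  - intro k; apply Rmult_le_pos; auto using Rabs_pos.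
  - intros N k i HN. rewrite fdiffn_scal, Rabs_mult.
    eapply Rle_trans; [apply Rmult_le_compat_l; [apply Rabs_pos|apply A1; auto]|]. right; ring.
Qed.

Lemma lattice_size_mult (A B : nat -> Z -> R) p1 p2 :
  lattice_size L A p1 -> lattice_size L B p2 -> lattice_size L (fun N i => A N i * B N i) (p1 + p2).
Proof.
  intros [M1 [H1 A1]] [M2 [H2 A2]]. exists (fun k => leibniz_coef k M1 M2). split.
  - intro k; apply leibniz_coef_nonneg; auto.
  - intros N k i HN.
    eapply Rle_trans.
    + apply (fdiffn_mult_bound k (A N) (B N) M1 M2 (INR N ^ p1) (INR N ^ p2) (L / INR N));
        auto using spacing_pos.
    + right. rewrite pow_add. ring.
Qed.

Lemma lattice_size_fwd (A : nat -> Z -> R) p :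
  lattice_size L A p -> lattice_size L (fun N i => INR N * (A N (i + 1)%Z - A N i)) p.
Proof.
  intros [M [H1 A1]]. exists (fun k => M (S k) * L). split.
  - intro k; apply Rmult_le_pos; auto; lra.
  - intros N k i HN. pose proof (INR_pos N HN).
    rewrite fdiffn_scal, Rabs_mult, Rabs_right by lra.
    change (fdiffn k (fun i => A N (i + 1)%Z - A N i) i) with (fdiffn (S k) (A N) i).
    eapply Rle_trans; [apply Rmult_le_compat_l; [lra|apply A1; auto]|].
    right. simpl pow. field. lra.
Qed.

Lemma lattice_size_back (A : nat -> Z -> R) p :
  lattice_size L A p -> lattice_size L (fun N i => INR N * (A N i - A N (i - 1)%Z)) p.
Proof.
  intros [M [H1 A1]]. exists (fun k => M (S k) * L). split.
  - intro k; apply Rmult_le_pos; auto; lra.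
  - intros N k i HN. pose proof (INR_pos N HN).
    rewrite fdiffn_scal, Rabs_mult, Rabs_right, fdiffn_back by lra.
    eapply Rle_trans; [apply Rmult_le_compat_l; [lra|apply A1; auto]|].
    right. simpl pow. field. lra.
Qed.

Lemma lattice_size_mulN (A : nat -> Z -> R) p :
  lattice_size L A p -> lattice_size L (fun N i => INR N * A N i) (S p).
Proof.
  intros [M [H1 A1]]. exists M. split; auto.
  intros N k i HN. pose proof (INR_pos N HN).
  rewrite fdiffn_scal, Rabs_mult, Rabs_right by lra.
  eapply Rle_trans; [apply Rmult_le_compat_l; [lra|apply A1; auto]|].
  right. simpl pow. ring.
Qed.

Lemma lattice_size_sum {X : Type} p (l : list X) (f : X -> nat -> Z -> R) :
  (forall x, In x l -> lattice_size L (f x) p) ->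
  lattice_size L (fun N i => sumR (map (fun x => f x N i) l)) p.
Proof.
  induction l as [|x l IH]; intros H; simpl.
  - apply (lattice_size_weaken _ 0); [lia|apply lattice_size_const].
  - apply (lattice_size_plus (f x) (fun N i => sumR (map (fun x => f x N i) l))).
    + apply H; left; auto.
    + apply IH; intros; apply H; right; auto.
Qed.

Lemma lattice_size_prod (t : list nat) (f : nat -> nat -> Z -> R) (e : nat -> nat) :
  (forall x, In x t -> lattice_size L (f x) (e x)) ->
  lattice_size L (fun N i => prodR (map (fun x => f x N i) t)) (list_sum (map e t)).
Proof.
  induction t as [|x t IH]; intros H; simpl.
  - apply lattice_size_const.
  - apply (lattice_size_mult (f x) (fun N i => prodR (map (fun x => f x N i) t))).
    + apply H; left; auto.
    + apply IH; intros; apply H; right; auto.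
Qed.

End LatticeSize.

Lemma derivable_pt_lim_shift (G : R -> R) (x s l : R) :
  derivable_pt_lim G (x + s) l -> derivable_pt_lim (fun y => G (y + s)) x l.
Proof.
  intros H eps Heps. destruct (H eps Heps) as [del Hd]. exists del. intros h Hh Hlt.
  replace (x + h + s) with (x + s + h) by ring. apply Hd; auto.
Qed.

Lemma fdiffn_samples_bound r : forall (G : nat -> R -> R) (B : nat -> R) (D c : R), 0 <= D ->
  (forall n x, derivable_pt_lim (G n) x (G (S n) x)) -> (forall n x, Rabs (G n x) <= B n) ->
  forall i, Rabs (fdiffn r (fun i => G 0%nat (IZR i * D + c)) i) <= B r * D ^ r.
Proof.
  induction r as [|r IH]; intros G B D c HD Hd Hb i.
  - simpl. rewrite Rmult_1_r. apply Hb.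
  - set (G' := fun n x => G n (x + D) - G n x).
    replace (fdiffn (S r) (fun i => G 0%nat (IZR i * D + c)) i)
      with (fdiffn r (fun i => G' 0%nat (IZR i * D + c)) i).
    2:{ simpl. f_equal. apply functional_extensionality; intro x. unfold G', fdiff.
        rewrite plus_IZR. do 2 f_equal. ring. }
    assert (HG' : forall n x, Rabs (G' n x) <= D * B (S n)).
    { intros n x. unfold G'. destruct HD as [HD|HD].
      - destruct (MVT_cor2 (G n) (G (S n)) x (x + D)) as [z [Hz _]]; [lra|intros; apply Hd|].
        rewrite Hz. replace (x + D - x) with D by ring.
        rewrite Rabs_mult, (Rabs_right D), Rmult_comm by lra.
        apply Rmult_le_compat_l; [lra|apply Hb].
      - subst D. rewrite Rplus_0_r, Rminus_diag, Rabs_R0, Rmult_0_l. lra. }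
    eapply Rle_trans.
    + apply (IH G' (fun n => D * B (S n))); auto.
      intros n x. unfold G'.
      apply (derivable_pt_lim_minus (fun y => G n (y + D)) (G n)); [|apply Hd].
      apply derivable_pt_lim_shift, Hd.
    + right. simpl pow. ring.
Qed.

Lemma reduce_mod (L x : R) : 0 < L -> exists z : Z, 0 <= x - IZR z * L <= L.
Proof.
  intros hL. destruct (archimed (x / L)) as [H1 H2].
  exists (up (x / L) - 1)%Z. rewrite minus_IZR.
  assert (E : x - (IZR (up (x / L)) - 1) * L = (x / L - IZR (up (x / L)) + 1) * L)
    by (field; lra).
  rewrite E. split; nra.
Qed.

Lemma xpos_mod (L : R) (N : nat) (i : Z) : (1 <= N)%nat ->
  xpos L N i = (IZR i - 1) * (L / INR N) + IZR (- ((i - 1) / Z.of_nat N)) * L.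
Proof.
  intros HN. pose proof (INR_pos N HN). unfold xpos.
  rewrite Z.mod_eq by lia. rewrite !minus_IZR, mult_IZR, opp_IZR, <- INR_IZR_INZ.
  field. lra.
Qed.

Section Samples.

Variables (L : R) (F : R -> R) (Fd : nat -> R -> R).
Hypothesis hL : 0 < L.
Hypothesis hper : forall x, F (x + L) = F x.
Hypothesis hF0 : forall x, Fd O x = F x.
Hypothesis hFd : forall (k : nat) (x : R), derivable_pt_lim (Fd k) x (Fd (S k) x).

(* All derivatives of F are L-periodic, by uniqueness of derivatives. *)
Lemma Fd_periodic k : forall x, Fd k (x + L) = Fd k x.
Proof.
  induction k as [|k IH]; intros x.
  - rewrite !hF0; auto.
  - apply (uniqueness_limite (Fd k) x).
    + replace (Fd k) with (fun y => Fd k (y + L)) by (apply functional_extensionality; auto).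
      apply derivable_pt_lim_shift, hFd.
    + apply hFd.
Qed.

Lemma Fd_periodic_Z k (z : Z) x : Fd k (x + IZR z * L) = Fd k x.
Proof.
  assert (Hn : forall n x, Fd k (x + INR n * L) = Fd k x).
  { induction n as [|n IHn]; intro y.
    - simpl. rewrite Rmult_0_l, Rplus_0_r; auto.
    - rewrite S_INR. replace (y + (INR n + 1) * L) with ((y + INR n * L) + L) by ring.
      rewrite Fd_periodic; auto. }
  destruct z as [|p|p].
  - simpl. rewrite Rmult_0_l, Rplus_0_r; auto.
  - rewrite <- positive_nat_Z, <- INR_IZR_INZ. apply Hn.
  - replace (IZR (Z.neg p)) with (- INR (Pos.to_nat p))
      by (rewrite INR_IZR_INZ, positive_nat_Z; reflexivity).
    rewrite <- (Hn (Pos.to_nat p) (x + - INR (Pos.to_nat p) * L)). f_equal; ring.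
Qed.

(* A continuous periodic function is bounded: it attains its extrema on [0, L]. *)
Lemma Fd_bounded k : exists B, forall x, Rabs (Fd k x) <= B.
Proof.
  assert (Hc : forall c, 0 <= c <= L -> continuity_pt (Fd k) c).
  { intros c _. apply derivable_continuous_pt. exists (Fd (S k) c). apply hFd. }
  destruct (continuity_ab_maj (Fd k) 0 L) as [a [Ha _]]; [lra|auto|].
  destruct (continuity_ab_min (Fd k) 0 L) as [b [Hb _]]; [lra|auto|].
  exists (Rmax (Rabs (Fd k a)) (Rabs (Fd k b))). intros x.
  destruct (reduce_mod L x hL) as [z Hz].
  replace (Fd k x) with (Fd k (x - IZR z * L))
    by (rewrite <- (Fd_periodic_Z k z (x - IZR z * L)); f_equal; ring).
  specialize (Ha _ Hz). specialize (Hb _ Hz).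
  unfold Rabs, Rmax. repeat destruct Rcase_abs; repeat destruct Rle_dec; lra.
Qed.

Lemma samples_size k : lattice_size L (fun N i => Fd k (xpos L N i)) 0.
Proof.
  assert (HB : forall n, {B | forall x, Rabs (Fd n x) <= B}).
  { intro n. apply constructive_indefinite_description, Fd_bounded. }
  set (B := fun n => proj1_sig (HB n)).
  assert (HBn : forall n x, Rabs (Fd n x) <= B n) by (intros n x; exact (proj2_sig (HB n) x)).
  exists (fun r => B (r + k)%nat). split.
  { intro r. eapply Rle_trans; [apply Rabs_pos|apply (HBn _ 0)]. }
  intros N r i HN.
  replace (fun i => Fd k (xpos L N i))
    with (fun i => Fd (0 + k)%nat (IZR i * (L / INR N) + - (L / INR N))).
  2:{ apply functional_extensionality; intro x. rewrite xpos_mod, Fd_periodic_Z by exact HN.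
      f_equal. ring. }
  eapply Rle_trans.
  - apply (fdiffn_samples_bound r (fun n => Fd (n + k)%nat) (fun n => B (n + k)%nat)).
    + apply Rlt_le, spacing_pos; auto.
    + intros n x. apply hFd.
    + intros n x. apply HBn.
  - right. simpl. ring.
Qed.

End Samples.

Lemma comps_spec m : forall s t, In t (comps m s) ->
  length t = m /\ list_sum t = s /\ (forall x, In x t -> (1 <= x)%nat).
Proof.
  induction m as [|m IH]; intros s t H.
  - destruct s; simpl in H; [|contradiction]. destruct H as [H|[]]. subst t.
    simpl; repeat split; auto; intros x [].
  - simpl in H. apply in_flat_map in H. destruct H as [a [Ha Ht]].
    apply in_map_iff in Ht. destruct Ht as [t' [Et Ht']]. subst t.
    apply in_seq in Ha. destruct (IH _ _ Ht') as [H1 [H2 H3]].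
    simpl. repeat split; try lia.
    intros x [Hx|Hx]; [lia|auto].
Qed.

Lemma in_le_list_sum (t : list nat) x : In x t -> (x <= list_sum t)%nat.
Proof.
  induction t as [|y t IH]; simpl; [contradiction|].
  intros [H|H]; [lia|specialize (IH H); lia].
Qed.

Lemma half_exponents_bound (t : list nat) : (forall x, In x t -> (1 <= x)%nat) ->
  (2 * list_sum (map (fun x => (x - 1) / 2) t) + length t <= list_sum t)%nat.
Proof.
  induction t as [|x t IH]; intros H; [simpl; lia|].
  assert (1 <= x)%nat by (apply H; left; auto).
  cbn [map list_sum fold_right length]. unfold list_sum in IH.
  pose proof (Nat.Div0.mul_div_le (x - 1) 2).
  specialize (IH (fun y Hy => H y (or_intror Hy))). lia.
Qed.

Lemma prodR_map_scal (c : R) (g : nat -> R) (t : list nat) :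
  prodR (map (fun x => c * g x) t) = c ^ length t * prodR (map g t).
Proof. induction t as [|x t IH]; simpl; [ring|]. rewrite IH. ring. Qed.

(* The two kinds of terms in the recursion for c_{ij}, coming from the
   pair interaction (x_i - x_{i-1})^{-2} and from the external force F. *)
Definition interaction_term (L : R) (Fd : nat -> R -> R) (f j m : nat) (t : list nat)
    (N : nat) (i : Z) : R :=
  dcoef m / INR j * / ((L / INR N) ^ (2 + m)) *
  (prodR (map (fun jp => (cfuel L Fd N f (i + 1)%Z jp - cfuel L Fd N f i jp) / INR (jp + 1)) t)
   - prodR (map (fun jp => (cfuel L Fd N f (i - 1 + 1)%Z jp - cfuel L Fd N f (i - 1)%Z jp)
                            / INR (jp + 1)) t)).

Definition force_term (L : R) (Fd : nat -> R -> R) (f j k : nat) (t : list nat)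
    (N : nat) (i : Z) : R :=
  / (INR j * INR (fact k)) * Fd k (xpos L N i) *
  prodR (map (fun jp => cfuel L Fd N f i jp / INR (jp + 1)) t).

Lemma cfuel_unfold L Fd N f i j : (3 <= j)%nat ->
  cfuel L Fd N (S f) i j =
  - sumR (map (fun m => sumR (map (fun t => interaction_term L Fd f j m t N i)
                                   (comps m (j - m - 1)))) (seq 1 ((j - 1) / 2)))
  + sumR (map (fun k => sumR (map (fun t => force_term L Fd f j k t N i)
                                   (comps k (j - k - 1)))) (seq 1 ((j - 1) / 2))).
Proof. intros Hj. destruct j as [|[|[|j']]]; try lia. reflexivity. Qed.

Section Coefficients.

Variables (L : R) (F : R -> R) (Fd : nat -> R -> R).
Hypothesis hL : 0 < L.
Hypothesis hper : forall x, F (x + L) = F x.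
Hypothesis hF0 : forall x, Fd O x = F x.
Hypothesis hFd : forall (k : nat) (x : R), derivable_pt_lim (Fd k) x (Fd (S k) x).

Definition factors_sized (f : nat) (t : list nat) : Prop :=
  forall jp, In jp t -> lattice_size L (fun N i => cfuel L Fd N f i jp) ((jp - 1) / 2).

(* An interaction term has size N^{Σe+1}, e_p = ⌊(j_p - 1)/2⌋: the prefactor
   h^{-2-m} gives N^{2+m} and the m+1 differences take back N^{m+1}. *)
Lemma interaction_term_size f j m t : (1 <= m)%nat -> In t (comps m (j - m - 1)) ->
  factors_sized f t -> lattice_size L (interaction_term L Fd f j m t) ((j - 1) / 2).
Proof.
  intros Hm Ht Hfac. destruct (comps_spec _ _ _ Ht) as [Hlen [Hsum Hpos]].
  set (g := fun N i jp => (cfuel L Fd N f (i + 1)%Z jp - cfuel L Fd N f i jp) / INR (jp + 1)).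
  set (P := fun N i => prodR (map (fun jp => INR N * g N i jp) t)).
  assert (HP : lattice_size L P (list_sum (map (fun x => (x - 1) / 2) t))%nat).
  { apply (lattice_size_prod L hL t (fun jp N i => INR N * g N i jp)).
    intros x Hx. apply lattice_size_ext with
      (A := fun N i => / INR (x + 1) * (INR N * (cfuel L Fd N f (i + 1)%Z x - cfuel L Fd N f i x))).
    - apply lattice_size_scal, (lattice_size_fwd L hL (fun N i => cfuel L Fd N f i x)), Hfac, Hx.
    - intros N i _. unfold g. field. apply not_0_INR. lia. }
  pose proof (half_exponents_bound t Hpos).
  apply (lattice_size_weaken L hL _ (S (list_sum (map (fun x => (x - 1) / 2) t))%nat)).
  { apply Nat.div_le_lower_bound; lia. }
  apply lattice_size_ext with
    (A := fun N i => dcoef m / INR j * / L ^ (2 + m) * (INR N * (INR N * (P N i - P N (i - 1)%Z)))).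
  - apply lattice_size_scal, lattice_size_mulN, (lattice_size_back L hL P), HP.
  - intros N i HN. pose proof (INR_pos N HN).
    unfold interaction_term, P. rewrite !prodR_map_scal, Hlen. fold (g N i) (g N (i - 1)%Z).
    replace (/ (L / INR N) ^ (2 + m)) with ((INR N * / L) ^ (2 + m))
      by (rewrite <- pow_inv; f_equal; field; lra).
    rewrite Rpow_mult_distr, pow_inv. simpl pow. ring.
Qed.

Lemma force_term_size f j k t : In t (comps k (j - k - 1)) ->
  factors_sized f t -> lattice_size L (force_term L Fd f j k t) ((j - 1) / 2).
Proof.
  intros Ht Hfac. destruct (comps_spec _ _ _ Ht) as [Hlen [Hsum Hpos]].
  assert (HP : lattice_size L (fun N i => prodR (map (fun jp => cfuel L Fd N f i jp / INR (jp + 1)) t))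
                 (list_sum (map (fun x => (x - 1) / 2) t))%nat).
  { apply (lattice_size_prod L hL t (fun jp N i => cfuel L Fd N f i jp / INR (jp + 1))).
    intros x Hx. apply lattice_size_ext with (A := fun N i => / INR (x + 1) * cfuel L Fd N f i x).
    - apply lattice_size_scal, Hfac, Hx.
    - intros N i _. unfold Rdiv. ring. }
  pose proof (half_exponents_bound t Hpos).
  apply (lattice_size_weaken L hL _ (0 + list_sum (map (fun x => (x - 1) / 2) t))%nat).
  { apply Nat.div_le_lower_bound; lia. }
  apply lattice_size_ext with
    (A := fun N i => / (INR j * INR (fact k)) *
            (Fd k (xpos L N i) * prodR (map (fun jp => cfuel L Fd N f i jp / INR (jp + 1)) t))).
  - apply lattice_size_scal, (lattice_size_mult L hL); [apply (samples_size L F); auto|exact HP].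
  - intros N i _. unfold force_term. ring.
Qed.

Lemma coef_size : forall j fuel, (j <= fuel)%nat ->
  lattice_size L (fun N i => cfuel L Fd N fuel i j) ((j - 1) / 2).
Proof.
  intro j. induction j as [j IH] using (well_founded_induction lt_wf).
  intros fuel Hjf. destruct fuel as [|f].
  { replace j with 0%nat by lia. simpl. apply lattice_size_const. }
  destruct (le_lt_dec 3 j) as [Hj3|Hj3].
  2:{ destruct j as [|[|[|]]]; try lia; simpl.
      - apply lattice_size_const.
      - apply (samples_size L F); auto.
      - apply lattice_size_const. }
  assert (Hfac : forall m t, (1 <= m)%nat -> In t (comps m (j - m - 1)) -> factors_sized f t).
  { intros m t Hm Ht jp Hjp. destruct (comps_spec _ _ _ Ht) as [_ [Hsum _]].
    pose proof (in_le_list_sum t jp Hjp). apply IH; lia. }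
  apply lattice_size_ext with (A := fun N i =>
     -1 * sumR (map (fun m => sumR (map (fun t => interaction_term L Fd f j m t N i)
                                         (comps m (j - m - 1)))) (seq 1 ((j - 1) / 2)))
     + sumR (map (fun k => sumR (map (fun t => force_term L Fd f j k t N i)
                                      (comps k (j - k - 1)))) (seq 1 ((j - 1) / 2)))).
  - apply lattice_size_plus; [apply lattice_size_scal|];
      apply lattice_size_sum; auto; intros m Hm; apply in_seq in Hm;
      apply lattice_size_sum; auto; intros t Ht.
    + apply interaction_term_size; [lia|exact Ht|apply (Hfac m); [lia|exact Ht]].
    + apply force_term_size; [exact Ht|apply (Hfac m); [lia|exact Ht]].
  - intros N i _. rewrite cfuel_unfold by lia. ring.
Qed.

End Coefficients.

Lemma ln_le_compat (x y : R) : 0 < x -> x <= y -> ln x <= ln y.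
Proof.
  intros Hx [Hxy|Hxy]; [now apply Rlt_le, ln_increasing|subst; lra].
Qed.

Lemma log_ratio_eventually_le (u : nat -> R) (C : R) (n : nat) (eps : R) : 0 < eps ->
  (forall N, (1 <= N)%nat -> Rabs (u N) <= C * INR N ^ n) ->
  exists N0 : nat, forall N : nat, (2 <= N)%nat -> (N0 <= N)%nat -> u N <> 0 ->
    ln (Rabs (u N)) / ln (INR N) <= INR n + eps.
Proof.
  intros Heps Hu. set (C' := Rmax C 1).
  destruct (INR_archimed 1 (exp (ln C' / eps))) as [N0 HN0]; [lra|].
  exists N0. intros N HN2 HN0' HuN.
  assert (HN : 1 < INR N) by (apply (lt_INR 1); lia).
  assert (HlnN : 0 < ln (INR N)) by (rewrite <- ln_1; apply ln_increasing; lra).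
  assert (HC' : 1 <= C') by apply Rmax_r.
  assert (Hpos : 0 < Rabs (u N)) by (apply Rabs_pos_lt; auto).
  assert (Hbound : Rabs (u N) <= C' * INR N ^ n).
  { eapply Rle_trans; [apply Hu; lia|]. apply Rmult_le_compat_r; [apply pow_le; lra|apply Rmax_l]. }
  assert (Hlog : ln (Rabs (u N)) <= ln C' + INR n * ln (INR N)).
  { rewrite <- ln_pow, <- ln_mult by (try apply pow_lt; lra). apply ln_le_compat; auto. }
  assert (HlogC : ln C' <= eps * ln (INR N)).
  { assert (ln C' / eps <= ln (INR N)).
    { rewrite <- (ln_exp (ln C' / eps)). apply ln_le_compat; [apply exp_pos|].
      apply Rle_trans with (INR N0); [lra|apply le_INR; auto]. }
    apply (Rmult_le_compat_l eps) in H; [|lra].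
    replace (eps * (ln C' / eps)) with (ln C') in H by (field; lra). exact H. }
  apply (Rmult_le_reg_r (ln (INR N))); auto.
  unfold Rdiv. rewrite Rmult_assoc, Rinv_l, Rmult_1_r by lra. nra.
Qed.

Lemma INR_half_pred_le (j : nat) : (1 <= j)%nat -> INR ((j - 1) / 2) <= (INR j - 1) / 2.
Proof.
  intros Hj. pose proof (Nat.Div0.mul_div_le (j - 1) 2) as H.
  apply le_INR in H. rewrite mult_INR, minus_INR in H by lia.
  change (INR 2) with 2 in H. change (INR 1) with 1 in H. lra.
Qed.

Theorem mainTheorem6 (L : R) (F : R -> R) (Fd : nat -> R -> R)
  (hL : 0 < L)
  (hper : forall x, F (x + L) = F x)
  (hF0 : forall x, Fd O x = F x)
  (hFd : forall (k : nat) (x : R), derivable_pt_lim (Fd k) x (Fd (S k) x))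
  (i j : nat) (hi : (1 <= i)%nat) (hj : (1 <= j)%nat) :
  forall eps : R, 0 < eps ->
  exists N0 : nat, forall N : nat, (2 <= N)%nat -> (N0 <= N)%nat ->
    ccoef L Fd N (Z.of_nat i) j <> 0 ->
    ln (Rabs (ccoef L Fd N (Z.of_nat i) j)) / ln (INR N) <= (INR j - 1) / 2 + eps.
Proof.
  intros eps Heps.
  destruct (coef_size L F Fd hL hper hF0 hFd j j (Nat.le_refl j)) as [M [_ HM]].
  destruct (log_ratio_eventually_le (fun N => ccoef L Fd N (Z.of_nat i) j) (M 0%nat)
              ((j - 1) / 2) eps Heps) as [N0 HN0].
  { intros N HN. specialize (HM N 0%nat (Z.of_nat i) HN). simpl in HM.
    rewrite Rmult_1_r in HM. exact HM. }
  exists N0. intros N HN2 HN0' Hc.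
  eapply Rle_trans; [apply HN0; auto|].
  apply Rplus_le_compat_r, INR_half_pred_le, hj.
Qed.
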